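(* Let $\mathcal{B}$ be a Boolean control network. If $\mathcal{B}$ satisfies Type-III observability, then $\mathcal{B}$ is online observable.
   Context: $\mathbb{B}=\{0,1\}$. A BCN has inputs $\mathcal{I}=\mathbb{B}^\ell$, states $\mathcal{S}=\mathbb{B}^m$, outputs $\mathcal{O}=\mathbb{B}^n$ and updating rules $\sigma:\mathcal{I}\times\mathcal{S}\to\mathcal{S}$, $\rho:\mathcal{S}\to\mathcal{O}$, with $\mathsf{s}(t+1)=\sigma(\mathsf{i}(t),\mathsf{s}(t))$, $\mathsf{o}(t)=\rho(\mathsf{s}(t))$. For a state $\mathsf{s}$ and input sequence $\mathsf{I}=\mathsf{i}(0)\ldots\mathsf{i}(t)$, $H^{[0,t]}(\mathsf{s},\mathsf{I})=\mathsf{o}(0)\ldots\mathsf{o}(t+1)$ is the output sequence of the run with $\mathsf{s}(0)=\mathsf{s}$. Type-III observability: there exists an input sequence $\mathsf{I}=\mathsf{i}(0)\ldots\mathsf{i}(t)$ such that for any two distinct states $\mathsf{s},\mathsf{s}'$, $H^{[0,t]}(\mathsf{s},\mathsf{I})\ne H^{[0,t]}(\mathsf{s}',\mathsf{I})$. Online observability: with $\varepsilon$ denoting empty input/output, let $\xi(\mathsf{i},\mathsf{s})=\sigma(\mathsf{i},\mathsf{s})$ for $\mathsf{i}\ne\varepsilon$, $\xi(\varepsilon,\mathsf{s})=\mathsf{s}$; for $\mathsf{S}\subseteq\mathcal{S}$, $\zeta(\mathsf{S},\mathsf{i},\mathsf{o})=\{\xi(\mathsf{i},\mathsf{s}):\mathsf{s}\in\mathsf{S},\rho(\xi(\mathsf{i},\mathsf{s}))=\mathsf{o}\}$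 if $\mathsf{o}\ne\varepsilon$ and $\zeta(\mathsf{S},\mathsf{i},\varepsilon)=\{\xi(\mathsf{i},\mathsf{s}):\mathsf{s}\in\mathsf{S}\}$. For nonempty $\mathsf{S}$: $P_0(\mathsf{S})$ iff $|\mathsf{S}|=1$; $P_{n+1}(\mathsf{S})$ iff $|\mathsf{S}|=1$ or there is $\mathsf{i}\in\mathcal{I}$ with $|\zeta(\mathsf{S},\mathsf{i},\varepsilon)|=|\mathsf{S}|$ such that every nonempty $\zeta(\mathsf{S},\mathsf{i},\mathsf{o})$, $\mathsf{o}\in\mathcal{O}$, satisfies $P_n$. $\Gamma(\mathsf{S})$ is the least $n$ with $P_n(\mathsf{S})$, or $\infty$ if none. The BCN is online observable if $\Gamma(\zeta(\mathcal{S},\varepsilon,\mathsf{o}))\ne\infty$ for every $\mathsf{o}\in\mathcal{O}$ with $\zeta(\mathcal{S},\varepsilon,\mathsf{o})\ne\emptyset$. *)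

From mathcomp Require Import all_boot.
Set Implicit Arguments. Unset Strict Implicit. Unset Printing Implicit Defensive.

Notation Bvec k := (k.-tuple bool).

Section BCN.
Variables (l m n : nat).
Variable sigma : Bvec l -> Bvec m -> Bvec m.
Variable rho : Bvec m -> Bvec n.

(* H^{[0,t]}(s, I) = o(0) ... o(t+1) for I = i(0) ... i(t). *)
Fixpoint outputs (s : Bvec m) (I : seq (Bvec l)) : seq (Bvec n) :=
  match I with
  | [::] => [:: rho s]
  | i :: I' => rho s :: outputs (sigma i s) I'
  end.

Definition type3_observable : Prop :=
  exists I : seq (Bvec l), 0 < size I /\
    forall s s' : Bvec m, s != s' -> outputs s I != outputs s' I.

(* None plays the role of the empty input / output epsilon. *)
Definition xi (i : option (Bvec l)) (s : Bvec m) : Bvec m :=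
  match i with Some i => sigma i s | None => s end.

Definition zeta (S : {set Bvec m}) (i : option (Bvec l)) (o : option (Bvec n))
  : {set Bvec m} :=
  match o with
  | Some o => [set xi i s | s in S & rho (xi i s) == o]
  | None => [set xi i s | s in S]
  end.

Fixpoint Pn (k : nat) (S : {set Bvec m}) : bool :=
  match k with
  | 0 => #|S| == 1
  | k.+1 => (#|S| == 1) ||
      [exists i : Bvec l, (#|zeta S (Some i) None| == #|S|) &&
         [forall o : Bvec n, (zeta S (Some i) (Some o) != set0) ==>
                              Pn k (zeta S (Some i) (Some o))]]
  end.

(* Gamma(S) <> infinity  iff  P_k(S) for some k. *)
Definition Gamma_finite (S : {set Bvec m}) : Prop := exists k, Pn k S.

Definition online_observable : Prop :=
  forall o : Bvec n, zeta setT None (Some o) != set0 ->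
    Gamma_finite (zeta setT None (Some o)).

End BCN.

From mathcomp Require Import all_boot.
Set Implicit Arguments. Unset Strict Implicit. Unset Printing Implicit Defensive.

(* Let I = i(0) ... i(t) be an input sequence whose output sequences separate all
   states.  Along the online procedure every current estimate S consists of states
   with the same current output, so the output sequences under a suffix J of I
   separate S.  The first input of J is then injective on S (two states with the
   same image would share their whole output sequence), and the rest of J separates
   each observed refinement of the image; after |I| steps the estimate is a
   singleton, so P_|I| holds. *)

Section OnlineObservability.
Variables (l m n : nat).
Variable sigma : Bvec l -> Bvec m -> Bvec m.
Variable rho : Bvec m -> Bvec n.

Local Notation H := (outputs sigma rho).
Local Notation zeta := (zeta sigma rho).

Definition same_output (S : {set Bvec m}) : Prop :=
  {in S &, forall s s', rho s = rho s'}.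

Lemma rho_zeta (S : {set Bvec m}) i o y : y \in zeta S i (Some o) -> rho y = o.
Proof. by case/imsetP=> s; rewrite inE => /andP[_ /eqP <-] ->. Qed.

Lemma same_output_zeta (S : {set Bvec m}) i o : same_output (zeta S i (Some o)).
Proof. by move=> y y' /rho_zeta -> /rho_zeta ->. Qed.

Lemma zeta_sub_image (S : {set Bvec m}) i o :
  zeta S (Some i) (Some o) \subset sigma i @: S.
Proof.
apply/subsetP=> y /imsetP[s]; rewrite inE => /andP[Ss _] ->.
exact: imset_f.
Qed.

Lemma card1_same_output (S : {set Bvec m}) :
  S != set0 -> same_output S -> {in S &, injective rho} -> #|S| == 1.
Proof.
case/set0Pn=> x Sx eq_rho inj_rho; apply/cards1P; exists x.
apply/setP=> s; rewrite inE; apply/idP/eqP=> [Ss|-> //].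
exact: inj_rho (eq_rho s x Ss Sx).
Qed.

Lemma outputs_cons_inj (S : {set Bvec m}) i J :
  same_output S -> {in S &, injective (H ^~ (i :: J))} ->
  {in S &, injective (fun s => H (sigma i s) J)}.
Proof.
by move=> eq_rho inj s s' Ss Ss' E; apply: inj => //=; rewrite (eq_rho s s') // E.
Qed.

Lemma outputs_image_inj (S : {set Bvec m}) i J :
  {in S &, injective (fun s => H (sigma i s) J)} ->
  {in S &, injective (sigma i)} /\ {in sigma i @: S &, injective (H ^~ J)}.
Proof.
move=> inj; split=> [s s' Ss Ss' E|]; first by apply: inj; rewrite //= E.
by move=> _ _ /imsetP[s Ss ->] /imsetP[s' Ss' ->] E; rewrite (inj s s').
Qed.

Lemma Pn_outputs_inj (J : seq (Bvec l)) (S : {set Bvec m}) :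
  S != set0 -> same_output S -> {in S &, injective (H ^~ J)} ->
  Pn sigma rho (size J) S.
Proof.
elim: J S => [|i J IH] S S_n0 eq_rho inj.
  by apply: card1_same_output => // s s' Ss Ss' E; apply: inj; rewrite //= E.
have [inj_sigma inj_J] := outputs_image_inj (outputs_cons_inj eq_rho inj).
apply/orP; right; apply/existsP; exists i.
rewrite -/(zeta S (Some i) None) card_in_imset // eqxx andTb.
apply/forallP=> o; apply/implyP=> zeta_n0.
apply: IH => //; first exact: same_output_zeta.
apply: sub_in2 inj_J; apply/subsetP; exact: zeta_sub_image.
Qed.

End OnlineObservability.

Theorem lemma2 (l m n : nat)
  (sigma : (l.-tuple bool) -> (m.-tuple bool) -> (m.-tuple bool))
  (rho : (m.-tuple bool) -> (n.-tuple bool)) :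
  type3_observable sigma rho -> online_observable sigma rho.
Proof.
move=> [I [_ sepI]] o zeta_n0; exists (size I).
apply: Pn_outputs_inj => //; first exact: same_output_zeta.
move=> s s' _ _ E; case: (eqVneq s s') => // /sepI.
by rewrite E eqxx.
Qed.
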